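(* Let $T\in\mathbb{T}$ be a weighted caterpillar that is not a star, with $n$ pendant vertices and $k$ non-pendant vertices $v_1,\dots,v_k$ such that $v_i$ is adjacent to $v_{i+1}$ for $i=1,\dots,k-1$. Let $t_i$ be the number of pendant vertices adjacent to $v_i$. Then the number of edges of $T^{\#}$ is $n+t_1t_2+t_2t_3+\cdots+t_{k-1}t_k$.
   Context: $\mathbb{T}$ is the class of simple undirected weighted trees $T$ (nonzero real weights on edges) such that (i) $T$ has at least one non-pendant vertex, and (ii) every non-pendant vertex of $T$ is adjacent to at least one pendant vertex (a vertex of degree one). A caterpillar is a tree such that deleting all leaves and their incident edges yields a path. The adjacency matrix $A$ of $T$ has $(i,j)$ entry equal to the weight of edge $v_iv_j$, or $0$ if no edge; $A^{\#}$ is its group inverse (unique $X$ with $AXA=A$, $XAX=X$, $AX=XA$); $T^{\#}$ is the weighted graph on the vertex set of $T$ with $v_iv_j$ an edge iff $(A^{\#})_{ij}\neq 0$, weighted by that entry. *)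

From HB Require Import structures.
From mathcomp Require Import all_boot all_order all_algebra.
From mathcomp Require Import reals.
Set Implicit Arguments. Unset Strict Implicit. Unset Printing Implicit Defensive.
Import Order.TTheory GRing.Theory Num.Theory.
Local Open Scope ring_scope.

Section WeightedGraphs.
Variables (R : realType) (N : nat).
Implicit Types (A X : 'M[R]_N).

(* A weighted simple undirected graph on vertex set 'I_N, given by its
   (weighted) adjacency matrix: symmetric with zero diagonal; v_i v_j is an
   edge iff A i j != 0, and then its (nonzero) weight is A i j. *)
Definition is_weighted_graph A : Prop :=
  A^T = A /\ forall i, A i i = 0.

Definition adjb A : rel 'I_N := fun i j => A i j != 0.

Definition degree A (i : 'I_N) : nat := #|[set j | A i j != 0]|.

Definition pendant A (i : 'I_N) : bool := degree A i == 1%N.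

Definition edges A : {set 'I_N * 'I_N} :=
  [set p : 'I_N * 'I_N | (p.1 < p.2)%N && (A p.1 p.2 != 0)].

Definition nedges A : nat := #|edges A|.

Definition is_tree A : Prop :=
  is_weighted_graph A /\ (forall i j, connect (adjb A) i j) /\
  nedges A = N.-1.

Definition in_classT A : Prop :=
  is_tree A /\ (exists i, ~~ pendant A i) /\
  (forall i, ~~ pendant A i -> exists j, pendant A j && (A i j != 0)).

(* caterpillar: deleting all leaves yields a path, i.e. the non-pendant
   vertices can be listed without repetition so that consecutive ones are
   adjacent (in a tree the induced subgraph is then exactly that path). *)
Definition is_caterpillar A : Prop :=
  is_tree A /\ exists s : seq 'I_N,
    [/\ uniq s, (forall x, (x \in s) = ~~ pendant A x) & sorted (adjb A) s].

Definition is_star A : Prop :=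
  is_tree A /\ exists c : 'I_N, forall j, j != c -> A c j != 0.

Definition is_group_inverse A X : Prop :=
  [/\ A *m X *m A = A, X *m A *m X = X & A *m X = X *m A].

End WeightedGraphs.

From HB Require Import structures.
From mathcomp Require Import all_boot all_order all_algebra.
From mathcomp Require Import reals zify.
Set Implicit Arguments. Unset Strict Implicit. Unset Printing Implicit Defensive.
Import Order.TTheory GRing.Theory Num.Theory.

(* Split the vertices of T into pendant and inner ones, with diagonal projections
   P and Q. Pendant vertices are pairwise non-adjacent and each has a unique
   neighbour, which is inner; hence A P A is diagonal, with the nonzero entry
   w_a = sum of the squared pendant weights at each inner vertex a. This yields
   an explicit group inverse X = D A P + P A D - P (A D A D A) P with
   D = diag(1/w_a) on inner vertices, which is A^# by uniqueness. Reading off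
   its support, T^# consists of the n pendant edges of T together with t_a t_b
   edges for every edge ab of T between inner vertices. In a caterpillar an
   edge count of the tree shows that these inner edges are exactly v_i v_(i+1). *)

Lemma sum_blocks (I : finType) (p : pred I) (F : I -> I -> nat) :
  \sum_i \sum_j F i j =
    \sum_(i | p i) \sum_(j | p j) F i j + \sum_(i | ~~ p i) \sum_(j | ~~ p j) F i j
  + (\sum_(i | p i) \sum_(j | ~~ p j) F i j + \sum_(i | ~~ p i) \sum_(j | p j) F i j).
Proof.
rewrite (bigID p) /=; under eq_bigr do rewrite (bigID p) /=.
under [X in _ + X]eq_bigr do rewrite (bigID p) /=.
rewrite !big_split /=; lia.
Qed.

Lemma big_enum_injective (T : finType) (S : pred T) k (v : nat -> T)
    (V : Type) (idx : V) (op : Monoid.com_law idx) (F : T -> V) :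
  {in gtn k &, injective v} -> (forall x, S x <-> exists2 i, i < k & v i = x) ->
  \big[op/idx]_(x | S x) F x = \big[op/idx]_(0 <= i < k) F (v i).
Proof.
move=> v_inj v_onto; pose w (i : 'I_k) := v i.
have w_inj : injective w.
  by move=> i j /v_inj eq_ij; apply/val_inj/eq_ij; rewrite inE ltn_ord.
rewrite big_mkord -(big_imset _ (in2W w_inj)); apply: eq_bigl => x.
apply/idP/imsetP => [/v_onto[i lt_ik <-]|[i _ ->]]; first by exists (Ordinal lt_ik).
by apply/v_onto; exists i.
Qed.

Lemma sum_pick_nat (F : nat -> nat) m k :
  \sum_(0 <= j < k) F j * (j == m) = F m * (m < k).
Proof.
elim: k => [|k IHk]; first by rewrite big_geq // muln0.
rewrite big_nat_recr //= IHk ltnS.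
by case: (ltngtP m k) => [|_|<-]; rewrite ?muln0 ?muln1 ?addn0.
Qed.

Lemma sum_path_pairs (f : nat -> nat -> nat) k :
  \sum_(0 <= i < k) \sum_(0 <= j < k) f i j * ((j == i.+1) || (i == j.+1))
  = \sum_(0 <= i < k.-1) (f i i.+1 + f i.+1 i).
Proof.
have path_ind i j : ((j == i.+1) || (i == j.+1)) = (j == i.+1) + (i == j.+1) :> nat.
  by case: eqP => ?; case: eqP => ? //=; lia.
have drop_last (G : nat -> nat) :
    \sum_(0 <= i < k) G i * (i.+1 < k) = \sum_(0 <= i < k.-1) G i.
  case: k => [|k]; first by rewrite !big_geq.
  rewrite big_nat_recr //= ltnn muln0 addn0.
  by apply: eq_big_nat => i /andP[_ lt_ik]; rewrite ltnS lt_ik muln1.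
under eq_bigr do under eq_bigr do rewrite path_ind mulnDr.
under eq_bigr do rewrite big_split /=.
rewrite [LHS]big_split [RHS]big_split /= [X in _ + X = _]exchange_big /=.
under eq_bigr do rewrite sum_pick_nat.
under [X in _ + X]eq_bigr do rewrite (sum_pick_nat (f^~ _)).
by rewrite !drop_last.
Qed.

Lemma path_rel_of_count (e : nat -> nat -> bool) k :
    (forall i, i.+1 < k -> e i i.+1 && e i.+1 i) ->
    \sum_(0 <= i < k) \sum_(0 <= j < k) e i j = (k.-1).*2 ->
  forall i j, i < k -> j < k -> e i j = (j == i.+1) || (i == j.+1).
Proof.
move=> e_path e_count i j lt_ik lt_jk.
pose c a b := (b == a.+1) || (a == b.+1).
have c_count : \sum_(0 <= i < k) \sum_(0 <= j < k) c i j = (k.-1).*2.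
  have := sum_path_pairs (fun _ _ => 1) k; rewrite sum_nat_const_nat subn0 muln2.
  by under eq_bigr do under eq_bigr do rewrite mul1n.
have pairsE (F : nat -> nat -> nat) : \sum_(0 <= i < k) \sum_(0 <= j < k) F i j
    = \sum_(p : 'I_k * 'I_k) F p.1 p.2.
  rewrite big_mkord -(pair_bigA _ (fun a b : 'I_k => F a b)) /=.
  by apply: eq_bigr => a _; rewrite big_mkord.
have c_le_e (p : 'I_k * 'I_k) :
    true -> c p.1 p.2 <= e p.1 p.2 ?= iff (c p.1 p.2 == e p.1 p.2 :> nat).
  move=> _; apply: leqif_eq; case: p => [[a lt_ak] [b lt_bk]] /=; rewrite /c.
  case: eqP => [eq_ba | _]; first by move: lt_bk; rewrite eq_ba => /e_path/andP[->].
  by case: eqP => [eq_ab | //]; move: lt_ak; rewrite eq_ab => /e_path/andP[_ ->].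
have := leqif_sum c_le_e.
rewrite -(pairsE (fun a b => c a b)) -(pairsE (fun a b => e a b)) c_count e_count.
move=> -[_]; rewrite eqxx => /esym/forallP/(_ (Ordinal lt_ik, Ordinal lt_jk)) /=.
by rewrite -/(c i j); case: (c i j); case: (e i j).
Qed.

Local Open Scope ring_scope.

Lemma diag_mulmx_diagE (R : pzRingType) n (f g : 'I_n -> R) (M : 'M[R]_n) i j :
  (diag_mx (\row_k f k) *m M *m diag_mx (\row_k g k)) i j = f i * M i j * g j.
Proof. by rewrite mul_mx_diag mul_diag_mx !mxE. Qed.

Lemma nedges_double (R : realType) N (M : 'M[R]_N) :
    (forall i j, (M i j != 0) = (M j i != 0)) -> (forall i, M i i = 0) ->
  (nedges M).*2 = (\sum_i \sum_j (M i j != 0%R : nat))%N.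
Proof.
move=> M_sym M_diag.
have half_lt : nedges M = (\sum_(i : 'I_N) \sum_(j : 'I_N) ((i < j)%N && (M i j != 0%R) : nat))%N.
  rewrite /nedges /edges -sum1dep_card big_mkcond.
  rewrite -(pair_bigA _ (fun i j : 'I_N => ((i < j)%N && (M i j != 0%R) : nat))) /=.
  by apply: eq_bigr => p _.
have half_gt : nedges M = (\sum_(i : 'I_N) \sum_(j : 'I_N) ((j < i)%N && (M i j != 0%R) : nat))%N.
  by rewrite half_lt exchange_big; do 2!apply: eq_bigr => ? _; rewrite M_sym.
rewrite -addnn {1}half_lt half_gt -big_split; apply: eq_bigr => i _.
rewrite -big_split; apply: eq_bigr => j _ /=.
by case: ltngtP => [||/val_inj->]; rewrite ?addn0 ?M_diag ?eqxx.
Qed.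

Section GroupInverse.
Variables (R : realType) (N : nat).
Implicit Types (A X Y P Q D : 'M[R]_N).

Lemma group_inverse_unique A X Y :
  is_group_inverse A X -> is_group_inverse A Y -> X = Y.
Proof.
case=> AXA XAX AX_XA [AYA YAY AY_YA].
have E_EF : X *m A = X *m A *m (Y *m A) by rewrite -{1}AYA !mulmxA.
have F_EF : Y *m A = X *m A *m (Y *m A).
  by rewrite -AY_YA -{1}AXA AX_XA !mulmxA.
have XA_YA : X *m A = Y *m A by rewrite E_EF -F_EF.
by rewrite -XAX XA_YA -mulmxA AX_XA XA_YA -AY_YA mulmxA YAY.
Qed.

Section Blocks.
Variables (A P Q D : 'M[R]_N).
Hypotheses (PQ1 : P + Q = 1%:M) (PQ0 : P *m Q = 0) (QP0 : Q *m P = 0).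
Hypotheses (PAP0 : P *m A *m P = 0) (PD0 : P *m D = 0).
Hypotheses (APAD : A *m P *m A *m D = Q) (DAPA : D *m A *m P *m A = Q).

(* Writing A = [[0, C], [C^T, B]] with respect to 1 = P + Q, the hypotheses say
   that D inverts C^T C on the range of Q; for D = Q D Q, block_ginv is the
   block matrix [[- C D B D C^T, C D], [D C^T, 0]]. *)
Definition block_ginv := D *m A *m P + P *m A *m D - P *m (A *m D *m A *m D *m A) *m P.

Lemma group_inverse_blocks : is_group_inverse A block_ginv.
Proof.
have QD : Q *m D = D by rewrite -[X in _ = X]mul1mx -PQ1 mulmxDl PD0 add0r.
have PP : P *m P = P by rewrite -[X in _ = X]mulmx1 -PQ1 mulmxDr PQ0 addr0.
have PAQ : P *m A *m Q = P *m A by rewrite -[X in _ = X]mulmx1 -PQ1 mulmxDr PAP0 add0r.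
have DAPA_r : D *m (A *m (P *m A)) = Q by rewrite !mulmxA.
have AX : A *m block_ginv = Q + P *m A *m D *m A *m P.
  rewrite /block_ginv mulmxBr mulmxDr !mulmxA APAD.
  rewrite -[X in X + _ - _]mul1mx -PQ1 mulmxDl !mulmxA.
  by rewrite addrAC addrK addrC.
have XA : block_ginv *m A = Q + P *m A *m D *m A *m P.
  rewrite /block_ginv mulmxBl mulmxDl -!mulmxA DAPA_r !mulmxA.
  rewrite -[X in _ + X - _]mulmx1 -PQ1 mulmxDr.
  by rewrite addrA addrK.
split; last by rewrite AX XA.
- rewrite AX mulmxDl -!mulmxA DAPA_r (mulmxA P A Q) PAQ -mulmxDl addrC PQ1.
  exact: mul1mx.
- rewrite XA mulmxDl {1}/block_ginv mulmxBr mulmxDr !mulmxA QD QP0 !mul0mx subr0 addr0.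
  rewrite /block_ginv !mulmxA; set Z := P *m A *m D.
  have ZAPD : Z *m A *m P *m D = 0 by rewrite -mulmxA PD0 mulmx0.
  have ZAPZ : Z *m A *m P *m Z = Z.
    have DAPAD : D *m (A *m (P *m (A *m D))) = D by rewrite !mulmxA DAPA QD.
    by rewrite /Z -!mulmxA (mulmxA P P) PP DAPAD.
  clearbody Z; rewrite mulmxBr mulmxDr !mulmxA ZAPD ZAPZ !mul0mx add0r.
  by rewrite addrA.
Qed.
End Blocks.
End GroupInverse.

Section ClassT.
Variables (R : realType) (N : nat) (A : 'M[R]_N).
Hypothesis AT : in_classT A.

Definition pendant_nbr (i : 'I_N) : 'I_N := odflt i [pick j | A i j != 0].

Lemma classT_sym i j : A i j = A j i.
Proof. by case: AT => [[[AtA _] _] _]; rewrite -{1}AtA mxE. Qed.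

Lemma classT_diag i : A i i = 0.
Proof. by case: AT => [[[_ A0] _] _]. Qed.

Lemma pendant_adjE i j : pendant A i -> (A i j != 0) = (j == pendant_nbr i).
Proof.
move=> /cards1P[x Ai_x].
have adjE l : (A i l != 0) = (l == x).
  by rewrite -in_set1 -Ai_x inE.
rewrite /pendant_nbr; case: pickP => [y|/(_ x)]; last by rewrite adjE eqxx.
by rewrite !adjE => /eqP ->.
Qed.

Lemma pendant_nbr_adj i : pendant A i -> A i (pendant_nbr i) != 0.
Proof. by move=> pi; rewrite pendant_adjE. Qed.

Lemma not_pendant_nbr i : pendant A i -> ~~ pendant A (pendant_nbr i).
Proof.
move=> pi; apply/negP => pb; set b := pendant_nbr i in pb.
have ib : i = pendant_nbr b by apply/eqP; rewrite -pendant_adjE // classT_sym pendant_nbr_adj.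
have closed_ib : closed (adjb A) [pred x | (x == i) || (x == b)].
  suff adj_ib x y : adjb A x y -> (x == i) || (x == b) -> (y == i) || (y == b).
    by move=> x y xy; apply/idP/idP; apply: adj_ib; rewrite // /adjb classT_sym.
  rewrite /adjb => xy /orP[]/eqP ex; rewrite ex pendant_adjE // in xy.
    by rewrite xy orbT.
  by rewrite -ib in xy; rewrite xy.
case: AT => [[_ [conn _]] [[z zNp] _]].
have := closed_connect closed_ib (conn i z); rewrite !inE eqxx => /esym/orP[]/eqP ez.
  by rewrite ez pi in zNp.
by rewrite ez pb in zNp.
Qed.

Lemma pendant_adj0 i j : pendant A i -> pendant A j -> A i j = 0.
Proof.
move=> pi pj; apply/eqP; rewrite -[_ == 0]negbK pendant_adjE //.
by apply: contraNN (not_pendant_nbr pi) => /eqP <-.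
Qed.

Lemma mulmx_pendant_l (M : 'M[R]_N) i j :
  pendant A i -> (A *m M) i j = A i (pendant_nbr i) * M (pendant_nbr i) j.
Proof.
move=> pi; rewrite mxE (bigD1 (pendant_nbr i)) //= big1 ?addr0 // => l.
by rewrite -pendant_adjE // => /negPn/eqP ->; rewrite mul0r.
Qed.

Lemma mulmx_pendant_r (M : 'M[R]_N) i j :
  pendant A j -> (M *m A) i j = M i (pendant_nbr j) * A (pendant_nbr j) j.
Proof.
move=> pj; rewrite mxE (bigD1 (pendant_nbr j)) //= big1 ?addr0 // => l.
by rewrite classT_sym -pendant_adjE // => /negPn/eqP ->; rewrite mulr0.
Qed.

Definition pendant_weight (a : 'I_N) : R := \sum_(l | pendant A l) A a l ^+ 2.

Lemma pendant_weight_neq0 a : ~~ pendant A a -> pendant_weight a != 0.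
Proof.
case: AT => _ [_ has_pendant] /has_pendant[l /andP[pl al]].
rewrite /pendant_weight psumr_eq0 => [|m _]; last exact: sqr_ge0.
by apply/allPn; exists l; rewrite ?mem_index_enum // pl sqrf_eq0.
Qed.

Definition pendant_proj : 'M[R]_N := diag_mx (\row_i (pendant A i)%:R).
Definition inner_proj : 'M[R]_N := diag_mx (\row_i (~~ pendant A i)%:R).
Definition inv_weight (a : 'I_N) : R := if pendant A a then 0 else (pendant_weight a)^-1.
Definition inv_weight_mx : 'M[R]_N := diag_mx (\row_i inv_weight i).

Lemma inv_weight_pendant a : pendant A a -> inv_weight a = 0.
Proof. by rewrite /inv_weight => ->. Qed.

Lemma inv_weight_eq0 a : (inv_weight a == 0) = pendant A a.
Proof.
rewrite /inv_weight; case: (boolP (pendant A a)) => pa; first by rewrite eqxx.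
by rewrite invr_eq0 (negbTE (pendant_weight_neq0 pa)).
Qed.

Lemma mulmx_APA : A *m pendant_proj *m A = diag_mx (\row_i pendant_weight i).
Proof.
apply/matrixP => i j; rewrite !mxE; under eq_bigr => l _ do rewrite mul_mx_diag !mxE.
case: eqVneq => [<-|ij].
  rewrite mulr1n /pendant_weight [RHS]big_mkcond; apply: eq_bigr => l _.
  by case: pendant; rewrite ?mulr1 ?mulr0 ?mul0r // classT_sym expr2.
rewrite mulr0n big1 // => l _; case: (boolP (pendant A l)) => pl; last by rewrite mulr0 mul0r.
have [Ail|] := eqVneq (A i l) 0; first by rewrite Ail !mul0r.
have [Alj|] := eqVneq (A l j) 0; first by rewrite Alj mulr0.
by rewrite (classT_sym i l) !(pendant_adjE _ pl) => /eqP ei /eqP ej; rewrite ei ej eqxx in ij.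
Qed.

Definition classT_ginv := block_ginv A pendant_proj inv_weight_mx.

Lemma classT_group_inverse : is_group_inverse A classT_ginv.
Proof.
have diag_eq (f g : 'I_N -> R) : f =1 g -> diag_mx (\row_i f i) = diag_mx (\row_i g i).
  by move=> fg; congr diag_mx; apply/rowP => i; rewrite !mxE.
have mul_diag (f g : 'I_N -> R) :
    diag_mx (\row_i f i) *m diag_mx (\row_i g i) = diag_mx (\row_i (f i * g i)).
  by rewrite mulmx_diag; apply: diag_eq => i; rewrite !mxE.
have diag0 (f : 'I_N -> R) : f =1 (fun=> 0) -> diag_mx (\row_i f i) = 0.
  by move=> f0; apply/matrixP => i j; rewrite !mxE f0 mul0rn.
apply: (@group_inverse_blocks _ _ _ _ inner_proj).
- apply/matrixP => i j; rewrite !mxE; case: pendant; case: (i == j); rewrite ?add0r ?addr0 //.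
- by rewrite mul_diag diag0 // => i; case: pendant; rewrite ?mulr0 ?mul0r.
- by rewrite mul_diag diag0 // => i; case: pendant; rewrite ?mulr0 ?mul0r.
- apply/matrixP => i j; rewrite mul_mx_diag mul_diag_mx !mxE.
  case: (boolP (pendant A i)) => pi; last by rewrite !mul0r.
  case: (boolP (pendant A j)) => pj; last by rewrite mulr0.
  by rewrite pendant_adj0 // mulr0 mul0r.
- by rewrite mul_diag diag0 // => i; rewrite /inv_weight; case: pendant; rewrite ?mulr0 ?mul0r.
- rewrite mulmx_APA mul_diag; apply: diag_eq => i; rewrite /inv_weight.
  case: (boolP (pendant A i)) => pi; first by rewrite mulr0.
  by rewrite divff // pendant_weight_neq0.
- rewrite -!mulmxA (mulmxA A) mulmx_APA mul_diag; apply: diag_eq => i.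
  rewrite /inv_weight; case: (boolP (pendant A i)) => pi; first by rewrite mul0r.
  by rewrite mulVf // pendant_weight_neq0.
Qed.

Lemma mulmx_ADADA i j : pendant A i -> pendant A j ->
  (A *m inv_weight_mx *m A *m inv_weight_mx *m A) i j =
  A i (pendant_nbr i) * inv_weight (pendant_nbr i) * A (pendant_nbr i) (pendant_nbr j)
  * inv_weight (pendant_nbr j) * A (pendant_nbr j) j.
Proof.
move=> pi pj; rewrite mulmx_pendant_r // {1}/inv_weight_mx mul_mx_diag mxE.
by rewrite -!mulmxA mulmx_pendant_l // mul_diag_mx !mxE !mulrA.
Qed.

Lemma classT_ginv_neq0 i j : (classT_ginv i j != 0) =
  if pendant A i then
    if pendant A j then A (pendant_nbr i) (pendant_nbr j) != 0 else A i j != 0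
  else pendant A j && (A i j != 0).
Proof.
have entryD (M1 M2 : 'M[R]_N) : (M1 + M2) i j = M1 i j + M2 i j by rewrite mxE.
have entryB (M1 M2 : 'M[R]_N) : (M1 - M2) i j = M1 i j - M2 i j by rewrite !mxE.
rewrite /classT_ginv /block_ginv entryB entryD /pendant_proj /inv_weight_mx !diag_mulmx_diagE.
rewrite -/inv_weight_mx.
case: (boolP (pendant A i)) => pi; case: (boolP (pendant A j)) => pj.
- have Abj : A (pendant_nbr j) j != 0 by rewrite classT_sym pendant_nbr_adj.
  rewrite mulmx_ADADA // (inv_weight_pendant pi) (inv_weight_pendant pj).
  rewrite !(mulr1n, mul0r, mulr0, mul1r, mulr1, add0r, sub0r) oppr_eq0 !mulf_eq0.
  rewrite !inv_weight_eq0 !(negbTE (not_pendant_nbr _)) // (negbTE Abj).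
  by rewrite (negbTE (pendant_nbr_adj pi)) !orbF.
- rewrite (inv_weight_pendant pi) !(mulr1n, mulr0n, mul0r, mulr0, mul1r, add0r, subr0).
  by rewrite mulf_eq0 inv_weight_eq0 (negbTE pj) orbF.
- rewrite (inv_weight_pendant pj) !(mulr1n, mulr0n, mul0r, mulr0, mulr1, addr0, subr0).
  by rewrite mulf_eq0 inv_weight_eq0 (negbTE pi).
- by rewrite !(mulr0n, mulr0, mul0r, subrr, addr0) eqxx.
Qed.

Definition pendant_degree (a : 'I_N) : nat := #|[set x | pendant A x & A a x != 0]|.

Lemma sum_pendant_nbr (G : 'I_N -> nat) :
  (\sum_(i | pendant A i) G (pendant_nbr i) =
   \sum_(a | ~~ pendant A a) pendant_degree a * G a)%N.
Proof.
rewrite (partition_big pendant_nbr (fun a => ~~ pendant A a)) /=; last exact: not_pendant_nbr.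
apply: eq_bigr => a _; rewrite (eq_bigr (fun=> G a)) => [|i /andP[_ /eqP <-] //].
rewrite sum_nat_const; congr (_ * _)%N; apply: eq_card => x.
rewrite unfold_in !inE /=; case: (boolP (pendant A x)) => //= px.
by rewrite classT_sym pendant_adjE // eq_sym.
Qed.

Lemma sum_mixed_adj :
  (\sum_(i | pendant A i) \sum_(j | ~~ pendant A j) (A i j != 0%R : nat)
   + \sum_(i | ~~ pendant A i) \sum_(j | pendant A j) (A i j != 0%R : nat))%N
  = #|[set x | pendant A x]|.*2.
Proof.
have one_nbr : (\sum_(i | pendant A i) \sum_(j | ~~ pendant A j) (A i j != 0%R : nat))%N
    = #|[set x | pendant A x]|.
  rewrite -sum1dep_card; apply: eq_bigr => i pi.
  rewrite (bigD1 (pendant_nbr i)) ?not_pendant_nbr //= pendant_nbr_adj // big1 // => j.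
  by case/andP=> _ /negbTE ne; rewrite pendant_adjE // ne.
rewrite [X in (_ + X)%N](exchange_big_dep (fun j => pendant A j)) //= one_nbr.
apply/eqP; rewrite -addnn eqn_add2l -[X in _ == X]one_nbr; apply/eqP/eq_bigr => j pj.
by apply: eq_big => [i|i _]; rewrite ?pj ?andbT // classT_sym.
Qed.

Lemma classT_nedges : (nedges A).*2 =
  (\sum_(a | ~~ pendant A a) \sum_(b | ~~ pendant A b) (A a b != 0%R : nat)
   + #|[set x | pendant A x]|.*2)%N.
Proof.
rewrite nedges_double => [|i j|i]; last exact: classT_diag; last by rewrite classT_sym.
rewrite (sum_blocks (pendant A)) sum_mixed_adj big1 ?add0n // => i pi.
by rewrite big1 // => j pj; rewrite pendant_adj0 ?eqxx.
Qed.

Lemma classT_ginv_nedges : (nedges classT_ginv).*2 =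
  (\sum_(a | ~~ pendant A a) \sum_(b | ~~ pendant A b)
     pendant_degree a * pendant_degree b * (A a b != 0%R)
   + #|[set x | pendant A x]|.*2)%N.
Proof.
rewrite nedges_double => [|i j|i]; first last.
- apply/eqP; rewrite -[_ == 0]negbK classT_ginv_neq0 !classT_diag eqxx.
  by case: (pendant A i); rewrite ?andbF.
- rewrite !classT_ginv_neq0 (classT_sym i j) (classT_sym (pendant_nbr i)).
  by case: (pendant A i); case: (pendant A j).
rewrite (sum_blocks (pendant A)) -sum_mixed_adj.
have inner0 :
    (\sum_(i | ~~ pendant A i) \sum_(j | ~~ pendant A j) (classT_ginv i j != 0%R))%N = 0%N.
  rewrite big1 // => i /negbTE pi; rewrite big1 // => j /negbTE pj.
  by rewrite classT_ginv_neq0 pi pj.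
have pendant_block :
    (\sum_(i | pendant A i) \sum_(j | pendant A j) (classT_ginv i j != 0%R) =
     \sum_(a | ~~ pendant A a) \sum_(b | ~~ pendant A b)
       pendant_degree a * pendant_degree b * (A a b != 0%R))%N.
  under eq_bigr => i pi do under eq_bigr => j pj do rewrite classT_ginv_neq0 pi pj.
  under eq_bigr do rewrite (sum_pendant_nbr (fun b => A _ b != 0%R : nat)).
  rewrite (sum_pendant_nbr (fun a =>
    \sum_(b | ~~ pendant A b) pendant_degree b * (A a b != 0%R)))%N.
  apply: eq_bigr => a _.
  by rewrite big_distrr; apply: eq_bigr => b _; exact: mulnA.
have mixed_block i j : pendant A i != pendant A j -> (classT_ginv i j != 0) = (A i j != 0).
  by rewrite classT_ginv_neq0; case: (pendant A i); case: (pendant A j).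
rewrite inner0 pendant_block addn0; congr (_ + (_ + _))%N.
  by apply: eq_bigr => i pi; apply: eq_bigr => j pj; rewrite mixed_block // pi.
by apply: eq_bigr => i /negbTE pi; apply: eq_bigr => j pj; rewrite mixed_block // pi pj.
Qed.

End ClassT.

Section Caterpillar.
Variables (R : realType) (N : nat) (A : 'M[R]_N) (k : nat) (v : nat -> 'I_N).
Hypotheses (AT : in_classT A) (v_inj : {in gtn k &, injective v}).
Hypothesis v_inner : forall x, ~~ pendant A x <-> exists2 i, (i < k)%N & v i = x.
Hypothesis v_path : forall i, (i.+1 < k)%N -> A (v i) (v i.+1) != 0.

Let sum_inner (F : 'I_N -> nat) :
  (\sum_(a | ~~ pendant A a) F a = \sum_(0 <= i < k) F (v i))%N.
Proof. exact: big_enum_injective. Qed.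

Lemma caterpillar_card : (#|[set x | pendant A x]| + k)%N = N.
Proof.
have -> : k = \sum_(a | ~~ pendant A a) 1 by rewrite sum_inner sum_nat_const_nat subn0 muln1.
rewrite sum1dep_card -[RHS]card_ord -(cardsC [set x | pendant A x]).
by congr (_ + _)%N; apply: eq_card => x; rewrite !inE.
Qed.

Lemma caterpillar_inner_adj i j : (i < k)%N -> (j < k)%N ->
  (A (v i) (v j) != 0) = (j == i.+1) || (i == j.+1).
Proof.
have k_gt0 : (0 < k)%N.
  by case: AT => _ [[z /v_inner[l lt_lk _]] _]; apply: leq_ltn_trans lt_lk.
have inner_count : (\sum_(a | ~~ pendant A a) \sum_(b | ~~ pendant A b)
    (A a b != 0%R : nat) = (k.-1).*2)%N.
  have := classT_nedges AT; case: AT => [[_ [_ ->]] _].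
  have := caterpillar_card; lia.
apply: (path_rel_of_count (e := fun i j => A (v i) (v j) != 0)) => [l /v_path adj|].
  by rewrite adj classT_sym.
rewrite -inner_count (sum_inner (fun a => \sum_(b | ~~ pendant A b) (A a b != 0%R : nat))%N).
by apply: eq_bigr => l _; rewrite sum_inner.
Qed.

Lemma caterpillar_ginv_nedges : nedges (classT_ginv A) =
  (#|[set x | pendant A x]|
   + \sum_(0 <= i < k.-1) pendant_degree A (v i) * pendant_degree A (v i.+1))%N.
Proof.
pose t i := pendant_degree A (v i).
apply: double_inj; rewrite classT_ginv_nedges // doubleD addnC; congr (_ + _)%N.
rewrite (sum_inner (fun a => \sum_(b | ~~ pendant A b)
  pendant_degree A a * pendant_degree A b * (A a b != 0%R))%N).
under eq_bigr do rewrite sum_inner.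
transitivity (\sum_(0 <= i < k) \sum_(0 <= j < k) t i * t j * ((j == i.+1) || (i == j.+1)))%N.
  apply: eq_big_nat => i /andP[_ lt_ik]; apply: eq_big_nat => j /andP[_ lt_jk].
  by rewrite caterpillar_inner_adj.
by rewrite sum_path_pairs big_split -addnn; congr (_ + _)%N; apply: eq_bigr => i _; rewrite mulnC.
Qed.

End Caterpillar.

Theorem proposition3p12 (R : realType) (N : nat) (A : 'M[R]_N)
  (n k : nat) (v : nat -> 'I_N) (t : nat -> nat) :
  in_classT A -> is_caterpillar A -> ~ is_star A ->
  n = #|[set x | pendant A x]| ->
  {in gtn k &, injective v} ->
  (forall x : 'I_N, ~~ pendant A x <-> exists2 i, (i < k)%N & v i = x) ->
  (forall i, (i.+1 < k)%N -> A (v i) (v i.+1) != 0) ->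
  (forall i, t i = #|[set x | pendant A x & A (v i) x != 0]|) ->
  forall X : 'M[R]_N, is_group_inverse A X ->
  nedges X = (n + \sum_(0 <= i < k.-1) t i * t i.+1)%N.
Proof.
move=> AT _ _ -> v_inj v_inner v_path t_def X XA.
rewrite (group_inverse_unique XA (classT_group_inverse AT)).
rewrite (caterpillar_ginv_nedges AT v_inj v_inner v_path).
by congr (_ + _)%N; apply: eq_bigr => i _; rewrite !t_def.
Qed.
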